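(* For every integer $d\ge 1$, the Euclidean space $\mathbb R^d$ and the $d$-dimensional real hyperbolic space $\mathbb H^d$ are almost-isometry unique.
   Context: For $\lambda>1$, an injection $f$ between metric spaces is $\lambda$-bi-Lipschitz if for all distinct $a,b$ in its domain, $d(f(a),f(b))<\lambda d(a,b)$ and $d(a,b)<\lambda d(f(a),f(b))$. Two metric spaces $X,Y$ are almost isometric if for every $\lambda>1$ there is a $\lambda$-bi-Lipschitz bijection from $X$ onto $Y$. A metric space $X$ is almost-isometry unique if every metric space almost isometric to $X$ is isometric to $X$. *)

From Stdlib Require Import Reals.
From mathcomp Require Import all_boot all_order all_algebra.
From mathcomp Require Import Rstruct.

Set Implicit Arguments.
Unset Strict Implicit.
Unset Printing Implicit Defensive.

Import GRing.Theory Num.Theory.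

Local Open Scope ring_scope.

Record metric_space := MetricSpace {
  mcarrier :> Type;
  mdist : mcarrier -> mcarrier -> R;
  mdist_self : forall x, mdist x x = 0;
  mdist_pos : forall x y, x <> y -> 0 < mdist x y;
  mdist_sym : forall x y, mdist x y = mdist y x;
  mdist_tri : forall x y z, mdist x z <= mdist x y + mdist y z
}.

Definition bi_lipschitz (X Y : Type) (dX : X -> X -> R) (dY : Y -> Y -> R)
  (lam : R) (f : X -> Y) : Prop :=
  injective f /\
  forall a b, a <> b ->
    dY (f a) (f b) < lam * dX a b /\ dX a b < lam * dY (f a) (f b).

Definition almost_isometric (X Y : Type) (dX : X -> X -> R) (dY : Y -> Y -> R)
  : Prop :=
  forall lam : R, 1 < lam ->
    exists f : X -> Y, bijective f /\ bi_lipschitz dX dY lam f.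

Definition isometric (X Y : Type) (dX : X -> X -> R) (dY : Y -> Y -> R) : Prop :=
  exists f : X -> Y, bijective f /\ forall a b, dY (f a) (f b) = dX a b.

Definition almost_isometry_unique (X : Type) (dX : X -> X -> R) : Prop :=
  forall Y : metric_space,
    almost_isometric dX (@mdist Y) -> isometric dX (@mdist Y).

Definition euclid (d : nat) : Type := 'I_d -> R.

Definition euclid_dist (d : nat) (x y : euclid d) : R :=
  sqrt (\sum_(i < d) (x i - y i) ^+ 2).

(** Real hyperbolic space H^d, hyperboloid model:
    { (t, v) in R x R^d | t > 0, t^2 - |v|^2 = 1 },
    with distance arcosh(t s - <v, w>). *)
Definition minkowski (d : nat) (p q : R * ('I_d -> R)) : R :=
  p.1 * q.1 - \sum_(i < d) p.2 i * q.2 i.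

Definition hyperbolic (d : nat) : Type :=
  { p : R * ('I_d -> R) | 0 < p.1 /\ minkowski p p = 1 }.

Definition arcosh (t : R) : R := ln (t + sqrt (t ^+ 2 - 1)).

Definition hyperbolic_dist (d : nat) (x y : hyperbolic d) : R :=
  arcosh (minkowski (sval x) (sval y)).

From Stdlib Require Import Reals.
From mathcomp Require Import all_boot all_order all_algebra.
From mathcomp Require Import Rstruct ring lra.
From mathcomp Require Import boolp classical_sets filter.
Import Order.TTheory GRing.Theory Num.Theory.
Local Open Scope ring_scope.
Set Implicit Arguments.
Unset Strict Implicit.

(* Both spaces are proper and homogeneous, and that is all the argument uses.
   Given lam_n-bi-Lipschitz bijections with lam_n -> 1, compose their
   inverses G_n : Y -> X with isometries of X so that a fixed point y0 goes to
   a base point x0.  Then G_n y stays in a bounded set of X, so its limit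
   g y along a non-principal ultrafilter exists; distances pass to the limit,
   so g is an isometry, and the same compactness argument applied to
   preimages G_0 (G_n^-1 x) shows that g is onto. *)

Definition lam (n : nat) : R := (1 + n.+1%:R^-1)%R.

Lemma lam_gt1 n : 1 < lam n.
Proof. by rewrite /lam ltrDl invr_gt0 ltr0n. Qed.

Lemma lam_le2 n : lam n <= 2.
Proof.
rewrite /lam -lerBlDl addrC addKr.
by rewrite invr_le1 ?unitfE ?pnatr_eq0 ?ler1n ?ltr0n.
Qed.

Definition ulim (U : set_system nat) (u : nat -> R) (L : R) : Prop :=
  forall e : R, 0 < e -> U (fun n => `|u n - L| < e).
Arguments ulim : clear scopes.

Section UltraLimits.

Variable U : set_system nat.
Context {U_proper : ProperFilter U}.
Hypothesis U_cofinite : (\oo `<=` U)%classic.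

Lemma ler_ulim u v L M :
  ulim U u L -> ulim U v M -> U (fun n => u n <= v n) -> L <= M.
Proof.
move=> uL vM uv; rewrite leNgt; apply/negP => ML.
have e0 : 0 < (L - M) / 2 by lra.
apply: (filter_const (F := U)).
apply: filterS3 (uL _ e0) (vM _ e0) uv => n; rewrite !ltr_norml.
by move=> /andP[? ?] /andP[? ?]; lra.
Qed.

Lemma ulim_cst c : ulim U (fun=> c) c.
Proof. by move=> e e0; apply: filterE => n; rewrite subrr normr0. Qed.

Lemma ulim_uniq u L M : ulim U u L -> ulim U u M -> L = M.
Proof.
move=> uL uM; have uu : U (fun n => u n <= u n) by apply: filterE.
by apply/eqP; rewrite eq_le (ler_ulim uL uM uu) (ler_ulim uM uL uu).
Qed.

Lemma ulimD u v L M :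
  ulim U u L -> ulim U v M -> ulim U (fun n => u n + v n) (L + M).
Proof.
move=> uL vM e e0; have e2 : 0 < e / 2 by lra.
apply: filterS2 (uL _ e2) (vM _ e2) => n; rewrite !ltr_norml.
by move=> /andP[? ?] /andP[? ?]; apply/andP; split; lra.
Qed.

Lemma ulimN u L : ulim U u L -> ulim U (fun n => - u n) (- L).
Proof. by move=> uL e /uL; apply: filterS => n; rewrite -opprD normrN. Qed.

Lemma ulimM u v L M :
  ulim U u L -> ulim U v M -> ulim U (fun n => u n * v n) (L * M).
Proof.
move=> uL vM e e0.
pose K := `|L| + `|M| + 1.
have K1 : 1 <= K by rewrite /K; have := normr_ge0 L; have := normr_ge0 M; lra.
pose r := Num.min 1 (e / (2 * K)).
have r0 : 0 < r by rewrite lt_min ltr01 /= divr_gt0 //; lra.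
have r1 : r <= 1 by rewrite ge_min lexx.
have rK : r * K <= e / 2.
  have : r <= e / (2 * K) by rewrite ge_min lexx orbT.
  by rewrite ler_pdivlMr; [rewrite mulrC; lra|lra].
apply: filterS2 (uL _ r0) (vM _ r0) => n uLn vMn.
have -> : u n * v n - L * M
    = (u n - L) * (v n - M) + (u n - L) * M + L * (v n - M) by ring.
have b1 : `|(u n - L) * (v n - M)| <= r * r.
  by rewrite normrM ler_pM // ltW.
have b2 : `|(u n - L) * M| <= r * `|M| by rewrite normrM ler_pM // ltW.
have b3 : `|L * (v n - M)| <= `|L| * r by rewrite normrM ler_pM // ltW.
have t1 := ler_normD ((u n - L) * (v n - M) + (u n - L) * M) (L * (v n - M)).
have t2 := ler_normD ((u n - L) * (v n - M)) ((u n - L) * M).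
have : r * r <= r by rewrite -[leRHS]mulr1 ler_pM // ltW.
have : r * K = r * `|L| + r * `|M| + r by rewrite /K; ring.
nra.
Qed.

Lemma ulim_sum k (F : 'I_k -> nat -> R) (L : 'I_k -> R) :
  (forall i, ulim U (F i) (L i)) ->
  ulim U (fun n => \sum_(i < k) F i n) (\sum_(i < k) L i).
Proof.
elim: k F L => [|k IH] F L FL.
  under eq_fun do rewrite big_ord0; rewrite big_ord0; exact: ulim_cst.
under eq_fun do rewrite big_ord_recr /=; rewrite big_ord_recr /=.
by apply: ulimD => //; apply: (IH (fun i => F (widen_ord (leqnSn k) i))).
Qed.

Lemma ulim_inv_succ : ulim U (fun n => n.+1%:R^-1) 0.
Proof.
move=> e e0; apply: U_cofinite; exists (Num.Def.archi_bound e^-1) => // n /= Nn.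
have Ne : e^-1 < n.+1%:R.
  have e1 : 0 <= e^-1 by rewrite invr_ge0 ltW.
  apply: (lt_le_trans (archi_boundP e1)).
  by rewrite ler_nat; apply: leqW.
rewrite subr0 ger0_norm ?invr_ge0 ?ler0n // -[e]invrK.
by rewrite ltf_pV2 ?posrE ?invr_gt0 ?ltr0n.
Qed.

Lemma ulim_lamM u L : ulim U u L -> ulim U (fun n => lam n * u n) L.
Proof.
move=> uL; rewrite -[L]mul1r; apply: ulimM => //.
rewrite -[1]addr0; apply: ulimD; [exact: ulim_cst|exact: ulim_inv_succ].
Qed.

Lemma ulim_bounded u B : UltraFilter U ->
  (forall n, `|u n| <= B) -> exists L, ulim U u L.
Proof.
move=> U_ultra uB; pose E r := U (fun n => r <= u n).
have E_bound : bound E.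
  exists B => r /filter_ex[n rn]; apply/RleP.
  by have := uB n; rewrite ler_norml; lra.
have E_ne : exists r, E r.
  by exists (- B); apply: filterE => n; have := uB n; rewrite ler_norml; lra.
have [L [L_ub L_least]] := completeness E E_bound E_ne.
exists L => e e0.
have below : U (fun n => L - e < u n).
  have [[r [Er Lr]]|nE] := pselect (exists r, E r /\ L - e < r).
    by apply: filterS Er => n rn; lra.
  suff: L <= L - e by lra.
  apply/RleP.
  apply: L_least => r Er; apply/RleP; rewrite leNgt; apply/negP => Lr.
  by apply: nE; exists r.
have above : U (fun n => u n < L + e).
  have [/L_ub/RleP|] := in_ultra_setVsetC (fun n => L + e <= u n) U_ultra.
    lra.
  by apply: filterS => n /=; rewrite ltNge => /negP.
apply: filterS2 below above => n ? ?.
by rewrite ltr_norml; apply/andP; split; lra.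
Qed.

Lemma ulim_continuity_pt f u L :
  continuity_pt f L -> ulim U u L -> ulim U (fun n => f (u n)) (f L).
Proof.
move=> fL uL e /RltP e0; have [a [/RltP a0 fa]] := fL e e0.
apply: filterS (uL _ a0) => n una.
have [->|neq] := eqVneq (u n) L; first by rewrite subrr normr0; apply/RltP.
apply/RltP; rewrite -RabsE -RminusE; apply: fa; split.
  by split => //; apply/eqP; rewrite eq_sym.
by rewrite /= /R_dist RabsE RminusE; apply/RltP.
Qed.

End UltraLimits.

Lemma mdist_ge0 (Y : metric_space) (a b : Y) : 0 <= mdist a b.
Proof. by have := mdist_tri a b a; rewrite mdist_self mdist_sym; lra. Qed.

Lemma isometric_of_surjective_isometry X (dX : X -> X -> R) (Y : metric_space)
    (g : Y -> X) :
  (forall a b, dX (g a) (g b) = mdist a b) -> (forall x, exists y, g y = x) ->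
  isometric dX (@mdist Y).
Proof.
move=> g_iso g_surj; have [f gK] := choice g_surj.
have g_inj a b : g a = g b -> a = b.
  move=> gab; apply: contrapT => /mdist_pos.
  by rewrite -g_iso gab g_iso mdist_self ltxx.
exists f; split; last by move=> a b; rewrite -[in RHS](gK a) -[in RHS](gK b) g_iso.
by exists g => [x|y]; [rewrite gK|apply: g_inj; rewrite gK].
Qed.

Section ProperHomogeneous.

Variable U : set_system nat.
Context {U_ultra : UltraFilter U}.
Hypothesis U_cofinite : (\oo `<=` U)%classic.

Variables (X : Type) (dX : X -> X -> R) (x0 : X).
Variable cvg : (nat -> X) -> X -> Prop.

Hypothesis dX_ge0 : forall p q, 0 <= dX p q.
Hypothesis dX_eq0 : forall p q, dX p q = 0 <-> p = q.
Hypothesis cvg_cst : forall p, cvg (fun=> p) p.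
Hypothesis ulim_dist : forall pn qn p q, cvg pn p -> cvg qn q ->
  ulim U (fun n => dX (pn n) (qn n)) (dX p q).
Hypothesis bounded_cvg : forall pn C,
  (forall n, dX (pn n) x0 <= C) -> exists p, cvg pn p.
Hypothesis homogeneous : forall p, exists T : X -> X,
  [/\ bijective T, forall a b, dX (T a) (T b) = dX a b & T p = x0].

Lemma normalized_inverse (Y : metric_space) (y0 : Y) l :
  (exists f : X -> Y, bijective f /\ bi_lipschitz dX (@mdist Y) l f) ->
  exists G : Y -> X, [/\ G y0 = x0,
    forall a b, dX (G a) (G b) <= l * mdist a b,
    forall a b, mdist a b <= l * dX (G a) (G b) &
    forall x, exists y, G y = x].
Proof.
case=> f [[g fK gK] [_ f_bil]].
have g_bil a b : dX (g a) (g b) <= l * mdist a b /\ mdist a b <= l * dX (g a) (g b).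
  have [<-|ab] := pselect (a = b).
    by rewrite mdist_self (proj2 (dX_eq0 _ _) erefl) mulr0.
  have /f_bil[] : g a <> g b by move/(congr1 f); rewrite !gK.
  by rewrite !gK => /ltW ? /ltW.
have [T [[Ti TK TiK] T_iso Tg]] := homogeneous (g y0).
exists (T \o g); split => //= [a b|a b|x].
- by rewrite T_iso; case: (g_bil a b).
- by rewrite T_iso; case: (g_bil a b).
- by exists (f (Ti x)); rewrite fK TiK.
Qed.

Section LimitMap.

Variables (Y : metric_space) (y0 : Y) (G : nat -> Y -> X).
Hypothesis G_base : forall n, G n y0 = x0.
Hypothesis G_lip : forall n a b, dX (G n a) (G n b) <= lam n * mdist a b.
Hypothesis G_colip : forall n a b, mdist a b <= lam n * dX (G n a) (G n b).
Hypothesis G_surj : forall n x, exists y, G n y = x.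

Lemma cvg_limit_map : exists g : Y -> X, forall y, cvg (fun n => G n y) (g y).
Proof.
have bounded y n : dX (G n y) x0 <= 2 * mdist y y0.
  rewrite -(G_base n); have := G_lip n y y0; have := lam_le2 n.
  have := mdist_ge0 y y0; nra.
by have [g g_lim] := choice (fun y => bounded_cvg (bounded y)); exists g.
Qed.

Variable g : Y -> X.
Hypothesis g_lim : forall y, cvg (fun n => G n y) (g y).

Lemma limit_map_isometry a b : dX (g a) (g b) = mdist a b.
Proof.
have lim_dX := ulim_dist (g_lim a) (g_lim b).
apply/eqP; rewrite eq_le; apply/andP; split.
  apply: ler_ulim lim_dX (ulim_lamM U_cofinite (ulim_cst (U := U) (mdist a b))) _.
  by apply: filterE => n; apply: G_lip.
apply: ler_ulim (ulim_cst (U := U) _) (ulim_lamM U_cofinite lim_dX) _.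
by apply: filterE => n; apply: G_colip.
Qed.

Lemma limit_map_surjective x : exists y, g y = x.
Proof.
have [yn Gyn] := choice (G_surj ^~ x).
pose qn n := G 0 (yn n).
have qn_bounded n : dX (qn n) x0 <= 4 * dX x x0.
  have := G_lip 0 (yn n) y0; have := G_colip n (yn n) y0; rewrite Gyn !G_base.
  have := lam_gt1 0; have := lam_le2 0; have := lam_gt1 n; have := lam_le2 n.
  have := mdist_ge0 (yn n) y0; have := dX_ge0 x x0; nra.
have [p qn_p] := bounded_cvg qn_bounded.
have [y Gyp] := G_surj 0 p.
exists y; apply/dX_eq0/eqP; rewrite eq_le dX_ge0 andbT.
have lim_qn : ulim U (fun n => 4 * dX p (qn n)) 0.
  rewrite -(mulr0 4) -(proj2 (dX_eq0 p p) erefl).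
  exact: ulimM (ulim_cst _) (ulim_dist (cvg_cst p) qn_p).
apply: ler_ulim (ulim_dist (g_lim y) (cvg_cst x)) lim_qn _.
apply: filterE => n; rewrite -(Gyn n) -Gyp.
have := G_lip n y (yn n); have := G_colip 0 y (yn n).
have := lam_gt1 0; have := lam_le2 0; have := lam_gt1 n; have := lam_le2 n.
have := mdist_ge0 y (yn n); have := dX_ge0 (G 0 y) (qn n); nra.
Qed.

End LimitMap.

Theorem almost_isometry_unique_of_proper_homogeneous : almost_isometry_unique dX.
Proof.
move=> Y almost_XY; have [f0 _] := almost_XY _ (lam_gt1 0).
pose y0 := f0 x0.
have [G G_spec] := choice (fun n => normalized_inverse y0 (almost_XY _ (lam_gt1 n))).
have G_base n : G n y0 = x0 by case: (G_spec n).
have G_lip n : forall a b, dX (G n a) (G n b) <= lam n * mdist a b.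
  by case: (G_spec n).
have G_colip n : forall a b, mdist a b <= lam n * dX (G n a) (G n b).
  by case: (G_spec n).
have G_surj n : forall x, exists y, G n y = x by case: (G_spec n).
have [g g_lim] := cvg_limit_map G_base G_lip.
apply: (@isometric_of_surjective_isometry _ _ _ g).
  exact: limit_map_isometry G_lip G_colip g g_lim.
exact: limit_map_surjective G_base G_lip G_colip G_surj g g_lim.
Qed.

End ProperHomogeneous.

Section Dot.

Variable d : nat.
Implicit Types v w : 'I_d -> R.

Definition dot v w : R := (\sum_(i < d) v i * w i)%R.

Lemma dotC v w : dot v w = dot w v.
Proof. by apply: eq_bigr => i _; rewrite mulrC. Qed.

Lemma dot_ge0 v : 0 <= dot v v.
Proof. by apply: sumr_ge0 => i _; rewrite -expr2 sqr_ge0. Qed.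

Lemma coord_sqr_le_dot v i : v i ^+ 2 <= dot v v.
Proof.
rewrite /dot (bigD1 i) //= -expr2 lerDl.
by apply: sumr_ge0 => j _; rewrite -expr2 sqr_ge0.
Qed.

Lemma dot_eq0 v : dot v v = 0 -> v = fun=> 0.
Proof.
move=> v0; apply: funext => i; apply/eqP; rewrite -sqrf_eq0 eq_le sqr_ge0 andbT.
by rewrite -v0 coord_sqr_le_dot.
Qed.

Lemma dot_comb v w x y :
  dot (fun i => x * v i - y * w i) (fun i => x * v i - y * w i) =
  x ^+ 2 * dot v v - 2 * x * y * dot v w + y ^+ 2 * dot w w.
Proof.
rewrite /dot !mulr_sumr -sumrB -big_split /=; apply: eq_bigr => i _; ring.
Qed.

Lemma dot_CauchySchwarz v w : dot v w ^+ 2 <= dot v v * dot w w.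
Proof.
have [w0|w_neq0] := eqVneq (dot w w) 0.
  have -> : dot v w = 0 by rewrite (dot_eq0 w0) /dot big1 // => i; rewrite mulr0.
  by rewrite w0 expr0n mulr0.
have w_pos : 0 < dot w w by rewrite lt_def w_neq0 dot_ge0.
have := dot_ge0 (fun i => dot w w * v i - dot v w * w i).
rewrite dot_comb; move: w_pos.
set A := dot v v; set B := dot w w; set C := dot v w; rewrite !expr2; nra.
Qed.

Lemma ulim_dot U {U_proper : ProperFilter U} (vn wn : nat -> 'I_d -> R) v w :
  (forall i, ulim U (fun n => vn n i) (v i)) ->
  (forall i, ulim U (fun n => wn n i) (w i)) ->
  ulim U (fun n => dot (vn n) (wn n)) (dot v w).
Proof.
move=> vn_v wn_w; apply: (ulim_sum (F := fun i n => vn n i * wn n i)) => i.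
exact: ulimM.
Qed.

End Dot.

Section Euclid.

Variable d : nat.
Implicit Types x y p : euclid d.

Lemma euclid_distE x y :
  euclid_dist x y = sqrt (dot (fun i => x i - y i) (fun i => x i - y i)).
Proof. by congr sqrt; apply: eq_bigr => i _; rewrite expr2. Qed.

Lemma euclid_dist_ge0 x y : 0 <= euclid_dist x y.
Proof. exact/RleP/sqrt_pos. Qed.

Lemma euclid_dist_eq0 x y : euclid_dist x y = 0 <-> x = y.
Proof.
split => [xy0|<-]; last first.
  by rewrite /euclid_dist big1 ?sqrt_0 // => i _; rewrite subrr expr0n.
have /dot_eq0 xy : dot (fun i => x i - y i) (fun i => x i - y i) = 0.
  by apply: sqrt_eq_0; [apply/RleP; apply: dot_ge0|rewrite -euclid_distE].
by apply: funext => i; apply/eqP; rewrite -subr_eq0 (congr1 (fun f => f i) xy).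
Qed.

Definition euclid_cvg U (pn : nat -> euclid d) p : Prop :=
  forall i, ulim U (fun n => pn n i) (p i).

Lemma ulim_euclid_dist U {U_proper : ProperFilter U} pn qn p q :
  euclid_cvg U pn p -> euclid_cvg U qn q ->
  ulim U (fun n => euclid_dist (pn n) (qn n)) (euclid_dist p q).
Proof.
move=> pn_p qn_q; rewrite euclid_distE; under eq_fun do rewrite euclid_distE.
apply: ulim_continuity_pt.
  by apply: continuity_pt_sqrt; apply/RleP; apply: dot_ge0.
by apply: ulim_dot => i; apply: ulimD => //; apply: ulimN.
Qed.

Lemma euclid_bounded_cvg U {U_ultra : UltraFilter U} pn C :
  (forall n, euclid_dist (pn n) (fun=> 0) <= C) -> exists p, euclid_cvg U pn p.
Proof.
move=> pn_C.
have coord_bounded i n : `|pn n i| <= C.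
  have := pn_C n; rewrite euclid_distE.
  have := coord_sqr_le_dot (fun j => pn n j - 0) i; rewrite subr0.
  set S := dot _ _; have S_ge0 : 0 <= S by apply: dot_ge0.
  have sqrtS : sqrt S * sqrt S = S by rewrite -RmultE sqrt_sqrt //; apply/RleP.
  have : 0 <= sqrt S by apply/RleP; apply: sqrt_pos.
  move: sqrtS; set r := sqrt S; set z := pn n i; rewrite expr2 => rS r0 zS rC.
  by rewrite ler_norml; apply/andP; split; nra.
have [p p_lim] := choice (fun i => ulim_bounded U_ultra (coord_bounded i)).
by exists p.
Qed.

Lemma euclid_homogeneous p : exists T : euclid d -> euclid d,
  [/\ bijective T, forall a b, euclid_dist (T a) (T b) = euclid_dist a b
    & T p = fun=> 0].
Proof.
exists (fun x i => x i - p i); split.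
- by exists (fun x i => x i + p i) => x; apply: funext => i; rewrite ?subrK ?addrK.
- move=> a b; rewrite !euclid_distE.
  by have -> : (fun i => a i - p i - (b i - p i)) = fun i => a i - b i
    by apply: funext => i; ring.
- by apply: funext => i; rewrite subrr.
Qed.

Theorem euclid_almost_isometry_unique : almost_isometry_unique (@euclid_dist d).
Proof.
have [U [U_ultra U_cofinite]] := ultraFilterLemma eventually_filter.
apply: (almost_isometry_unique_of_proper_homogeneous U_cofinite (x0 := fun=> 0)
  (cvg := euclid_cvg U)).
- exact: euclid_dist_ge0.
- exact: euclid_dist_eq0.
- by move=> p i; apply: ulim_cst.
- exact: ulim_euclid_dist.
- exact: euclid_bounded_cvg.
- exact: euclid_homogeneous.
Qed.

End Euclid.

Lemma ler_exp (a b : R) : a <= b -> exp a <= exp b.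
Proof. by move=> ab; rewrite leNgt; apply/negP => /RltP/exp_lt_inv/RltP; lra. Qed.

Lemma continuity_pt_ln (y : R) : 0 < y -> continuity_pt ln y.
Proof.
move=> /RltP y0; apply: derivable_continuous_pt.
exact: exist _ _ (derivable_pt_lim_ln y y0).
Qed.

Lemma arcoshE (M : R) : arcosh M = ln (M + sqrt (M ^+ 2 - 1)%R)%R.
Proof. by rewrite /arcosh RplusE RminusE R1E. Qed.

Lemma ler_exp_arcosh (M : R) : 1 <= M -> M <= exp (arcosh M).
Proof.
move=> M1; have s0 : 0 <= sqrt (M ^+ 2 - 1)%R by apply/RleP/sqrt_pos.
by rewrite arcoshE exp_ln; [lra|apply/RltP; rewrite R0E; lra].
Qed.

Lemma arcosh_ge0 (M : R) : 1 <= M -> 0 <= arcosh M.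
Proof.
move=> M1; rewrite leNgt; apply/negP => /RltP/exp_increasing/RltP.
by rewrite exp_0 R1E; have M_le := ler_exp_arcosh M1; lra.
Qed.

Lemma arcosh_eq0 (M : R) : 1 <= M -> arcosh M = 0 <-> M = 1.
Proof.
move=> M1; split => [M0|->].
  by have := ler_exp_arcosh M1; rewrite M0 exp_0 R1E => ?; lra.
by rewrite arcoshE expr1n subrr -R0E sqrt_0 R0E addr0 -R1E ln_1.
Qed.

Lemma ulim_arcosh U {U_proper : ProperFilter U} u M :
  1 <= M -> ulim U u M -> ulim U (fun n => arcosh (u n)) (arcosh M).
Proof.
move=> M1 uM; rewrite arcoshE; under eq_fun do rewrite arcoshE.
have s0 : 0 <= sqrt (M ^+ 2 - 1)%R by apply/RleP/sqrt_pos.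
apply: ulim_continuity_pt; first by apply: continuity_pt_ln; lra.
apply: ulimD => //; apply: ulim_continuity_pt.
  by apply: continuity_pt_sqrt; apply/RleP; rewrite R0E expr2; nra.
rewrite expr2; under eq_fun do rewrite expr2.
exact: ulimD (ulimM uM uM) (ulim_cst _).
Qed.

Section Hyperbolic.

Variable d : nat.
Implicit Types p q u x y : R * ('I_d -> R).

Lemma minkowskiE p q : minkowski p q = p.1 * q.1 - dot p.2 q.2.
Proof. by rewrite /minkowski RminusE RmultE. Qed.

Lemma minkowskiC p q : minkowski p q = minkowski q p.
Proof. by rewrite !minkowskiE mulrC dotC. Qed.

Definition on_hyperboloid p : Prop := 0 < p.1 /\ minkowski p p = 1.

Lemma hyperboloid_dot p : on_hyperboloid p -> dot p.2 p.2 = p.1 ^+ 2 - 1.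
Proof. by case=> _; rewrite minkowskiE expr2; lra. Qed.

Lemma hyperboloid_ge1 p : on_hyperboloid p -> 1 <= p.1.
Proof.
move=> hp; have := dot_ge0 p.2; rewrite (hyperboloid_dot hp).
by case: hp => p_pos _; rewrite expr2 => ?; nra.
Qed.

(* Cauchy-Schwarz and (t s - 1)^2 - (t^2 - 1) (s^2 - 1) = (t - s)^2. *)
Lemma minkowski_ge1 p q :
  on_hyperboloid p -> on_hyperboloid q -> 1 <= minkowski p q.
Proof.
move=> hp hq; have := dot_CauchySchwarz p.2 q.2.
rewrite minkowskiE (hyperboloid_dot hp) (hyperboloid_dot hq).
have := hyperboloid_ge1 hp; have := hyperboloid_ge1 hq.
set t := p.1; set s := q.1; set C := dot p.2 q.2 => s1 t1 CS.
have u_ge0 : 0 <= t * s - 1 by nra.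
have C_le : C * C <= (t * s - 1) * (t * s - 1).
  have := sqr_ge0 (t - s); move: CS; rewrite !expr2 => CS ts; nra.
nra.
Qed.

Lemma minkowski_eq1 p q :
  on_hyperboloid p -> on_hyperboloid q -> minkowski p q = 1 -> p = q.
Proof.
move=> hp hq; rewrite minkowskiE => pq1.
have := dot_CauchySchwarz p.2 q.2; have := dot_comb p.2 q.2 1 1.
rewrite (hyperboloid_dot hp) (hyperboloid_dot hq).
have := hyperboloid_ge1 hp; have := hyperboloid_ge1 hq; move: pq1.
set t := p.1; set s := q.1; set C := dot p.2 q.2 => pq1 s1 t1 dot_diff CS.
have C_eq : C = t * s - 1 by lra.
have ts : t = s by move: CS; rewrite C_eq !expr2 => CS; nra.
have /dot_eq0 v_eq : dot (fun i => 1 * p.2 i - 1 * q.2 i)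
    (fun i => 1 * p.2 i - 1 * q.2 i) = 0.
  by rewrite dot_diff C_eq -ts !expr2; ring.
apply: injective_projections => //; apply: funext => i; apply/eqP.
by rewrite -subr_eq0; have /= := congr1 (fun f => f i) v_eq; rewrite !mul1r => ->.
Qed.

Definition shift x u (a : R) : R * ('I_d -> R) :=
  (x.1 - a * u.1, fun i => x.2 i - a * u.2 i)%R.
Arguments shift : clear scopes.

Lemma minkowski_shiftl x u y a :
  minkowski (shift x u a) y = minkowski x y - a * minkowski u y.
Proof.
rewrite !minkowskiE /=.
have -> : dot (fun i => x.2 i - a * u.2 i) y.2 = dot x.2 y.2 - a * dot u.2 y.2.
  by rewrite /dot mulr_sumr -sumrB; apply: eq_bigr => i _; ring.
ring.
Qed.

Lemma minkowski_shiftr x u y a :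
  minkowski y (shift x u a) = minkowski y x - a * minkowski y u.
Proof. by rewrite minkowskiC minkowski_shiftl ![minkowski _ y]minkowskiC. Qed.

Lemma shiftK x u a : shift (shift x u a) u (- a) = x.
Proof.
case: x => t v; rewrite /shift /=; congr pair; first ring.
by apply: funext => i; ring.
Qed.

Lemma shift0 x u : shift x u 0 = x.
Proof.
case: x => t v; rewrite /shift /= mul0r subr0; congr pair.
by apply: funext => i; rewrite mul0r subr0.
Qed.

Definition reflection u x : R * ('I_d -> R) :=
  shift x u (2 * minkowski x u / minkowski u u)%R.

(* For [minkowski u u = 0] the reflection is the identity, as [_ / 0 = 0]. *)
Lemma reflection_isometry u x y :
  minkowski (reflection u x) (reflection u y) = minkowski x y.
Proof.
rewrite /reflection minkowski_shiftl !minkowski_shiftr [minkowski u y]minkowskiC.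
have [u0|u_neq0] := eqVneq (minkowski u u) 0.
  by rewrite u0 invr0 !mulr0 !mul0r !subr0.
by field.
Qed.

Lemma reflectionK u x : reflection u (reflection u x) = x.
Proof.
rewrite {1}/reflection.
suff -> : (2 * minkowski (reflection u x) u / minkowski u u)%R
    = - (2 * minkowski x u / minkowski u u)%R by exact: shiftK.
rewrite /reflection minkowski_shiftl.
have [u0|u_neq0] := eqVneq (minkowski u u) 0.
  by rewrite u0 invr0 !mulr0 oppr0.
by field.
Qed.

Definition origin : R * ('I_d -> R) := (1, fun=> 0)%R.

Lemma minkowski_origin x : minkowski x origin = x.1.
Proof.
by rewrite minkowskiE /= mulr1 /dot big1 ?subr0 // => i _; rewrite mulr0.
Qed.

Lemma origin_on_hyperboloid : on_hyperboloid origin.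
Proof. by split; rewrite ?minkowski_origin /= ?ltr01. Qed.

Lemma reflection_to_origin p :
  on_hyperboloid p -> reflection (shift p origin 1) p = origin.
Proof.
move=> hp; have p_origin : minkowski p origin = p.1 by rewrite minkowski_origin.
have o_origin : minkowski origin origin = 1 by rewrite minkowski_origin.
have [p1|p1] := eqVneq p.1 1.
  have -> : p = origin.
    by apply: minkowski_eq1 hp origin_on_hyperboloid _; rewrite p_origin.
  rewrite /reflection minkowski_shiftl !minkowski_shiftr o_origin.
  by rewrite !mulr1 !subrr !mulr0 mul0r shift0.
have pp : minkowski p p = 1 by case: hp.
rewrite /reflection minkowski_shiftl !minkowski_shiftr o_origin pp p_origin.
rewrite minkowskiC p_origin.
have -> : (2 * (1 - 1 * p.1) / (1 - 1 * p.1 - 1 * (p.1 - 1 * 1)))%R = 1.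
  by field; apply/eqP => h; move/eqP: p1; apply; lra.
rewrite /shift /=; congr pair; first ring.
by apply: funext => i; ring.
Qed.

Lemma reflection_on_hyperboloid p x : on_hyperboloid p -> on_hyperboloid x ->
  on_hyperboloid (reflection (shift p origin 1) x).
Proof.
move=> hp hx; split; last by rewrite reflection_isometry; case: hx.
have := reflection_isometry (shift p origin 1) x p.
rewrite reflection_to_origin // minkowski_origin => ->.
by have := minkowski_ge1 hx hp; lra.
Qed.

Implicit Types a b : hyperbolic d.

Lemma hyperbolic_eq a b : sval a = sval b -> a = b.
Proof.
by case: a b => [p hp] [q hq] /= pq; subst q; congr exist; apply: Prop_irrelevance.
Qed.

Lemma minkowski_hyperbolic_ge1 a b : 1 <= minkowski (sval a) (sval b).
Proof. exact: minkowski_ge1 (svalP a) (svalP b). Qed.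

Lemma hyperbolic_dist_ge0 a b : 0 <= hyperbolic_dist a b.
Proof. exact/arcosh_ge0/minkowski_hyperbolic_ge1. Qed.

Lemma hyperbolic_dist_eq0 a b : hyperbolic_dist a b = 0 <-> a = b.
Proof.
rewrite /hyperbolic_dist arcosh_eq0 ?minkowski_hyperbolic_ge1 //.
split => [ab|<-]; last by case: (svalP a).
by apply: hyperbolic_eq; apply: minkowski_eq1 ab; apply: svalP.
Qed.

Definition hyperbolic_origin : hyperbolic d := exist _ origin origin_on_hyperboloid.

Lemma hyperbolic_homogeneous a : exists T : hyperbolic d -> hyperbolic d,
  [/\ bijective T, forall b c, hyperbolic_dist (T b) (T c) = hyperbolic_dist b c
    & T a = hyperbolic_origin].
Proof.
pose u := shift (sval a) origin 1.
pose T b := exist _ (reflection u (sval b))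
  (reflection_on_hyperboloid (svalP a) (svalP b)) : hyperbolic d.
exists T; split.
- by exists T => b; apply: hyperbolic_eq; rewrite /= reflectionK.
- by move=> b c; rewrite /hyperbolic_dist /= reflection_isometry.
- by apply: hyperbolic_eq; rewrite /= reflection_to_origin //; apply: svalP.
Qed.

Definition coord_cvg U (pn : nat -> R * ('I_d -> R)) p : Prop :=
  ulim U (fun n => (pn n).1) p.1 /\ forall i, ulim U (fun n => (pn n).2 i) (p.2 i).

Lemma ulim_minkowski U {U_proper : ProperFilter U} pn qn p q :
  coord_cvg U pn p -> coord_cvg U qn q ->
  ulim U (fun n => minkowski (pn n) (qn n)) (minkowski p q).
Proof.
move=> [pn1 pn2] [qn1 qn2]; rewrite minkowskiE; under eq_fun do rewrite minkowskiE.
by apply: ulimD; [exact: ulimM|apply: ulimN; exact: ulim_dot].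
Qed.

Definition hyperbolic_cvg U (an : nat -> hyperbolic d) a : Prop :=
  coord_cvg U (fun n => sval (an n)) (sval a).

Lemma ulim_hyperbolic_dist U {U_proper : ProperFilter U} an bn a b :
  hyperbolic_cvg U an a -> hyperbolic_cvg U bn b ->
  ulim U (fun n => hyperbolic_dist (an n) (bn n)) (hyperbolic_dist a b).
Proof.
move=> an_a bn_b; apply: ulim_arcosh; first exact: minkowski_hyperbolic_ge1.
exact: ulim_minkowski.
Qed.

Lemma hyperbolic_bounded_cvg U {U_ultra : UltraFilter U} an C :
  (forall n, hyperbolic_dist (an n) hyperbolic_origin <= C) ->
  exists a, hyperbolic_cvg U an a.
Proof.
move=> an_C.
have t_ge1 n : 1 <= (sval (an n)).1 by apply: hyperboloid_ge1; apply: svalP.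
have t_bounded n : `|(sval (an n)).1| <= exp C.
  have := ler_exp (an_C n); rewrite /hyperbolic_dist minkowski_origin => tC.
  have t_exp := ler_exp_arcosh (t_ge1 n); have t1 := t_ge1 n.
  by rewrite ger0_norm; lra.
have v_bounded i n : `|(sval (an n)).2 i| <= exp C.
  have := coord_sqr_le_dot (sval (an n)).2 i.
  rewrite hyperboloid_dot; last exact: svalP.
  have := t_bounded n; have := t_ge1 n.
  move: (sval (an n)).1 ((sval (an n)).2 i) => t v t1 tC vt.
  rewrite ger0_norm in tC; last lra.
  by rewrite !expr2 in vt; rewrite ler_norml; apply/andP; split; nra.
have [T T_lim] := ulim_bounded U_ultra t_bounded.
have [V V_lim] := choice (fun i => ulim_bounded U_ultra (v_bounded i)).
have P_lim : coord_cvg U (fun n => sval (an n)) (T, V) by [].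
have P_mink : minkowski (T, V) (T, V) = 1.
  apply: ulim_uniq (ulim_minkowski P_lim P_lim) _.
  have -> : (fun n => minkowski (sval (an n)) (sval (an n))) = fun=> 1.
    by apply: funext => n; case: (svalP (an n)).
  exact: ulim_cst.
have T_ge1 : 1 <= T.
  by apply: ler_ulim (ulim_cst 1) T_lim _; apply: filterE.
have P_on : on_hyperboloid (T, V) by split => //=; lra.
by exists (exist _ (T, V) P_on).
Qed.

Theorem hyperbolic_almost_isometry_unique :
  almost_isometry_unique (@hyperbolic_dist d).
Proof.
have [U [U_ultra U_cofinite]] := ultraFilterLemma eventually_filter.
apply: (almost_isometry_unique_of_proper_homogeneous U_cofinite
  (x0 := hyperbolic_origin) (cvg := hyperbolic_cvg U)).
- exact: hyperbolic_dist_ge0.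
- exact: hyperbolic_dist_eq0.
- by move=> a; split => [|i]; apply: ulim_cst.
- exact: ulim_hyperbolic_dist.
- exact: hyperbolic_bounded_cvg.
- exact: hyperbolic_homogeneous.
Qed.

End Hyperbolic.

Theorem corollary3p2 (d : nat) (hd : (1 <= d)%N) :
  almost_isometry_unique (@euclid_dist d) /\
  almost_isometry_unique (@hyperbolic_dist d).
Proof.
split; [exact: euclid_almost_isometry_unique|exact: hyperbolic_almost_isometry_unique].
Qed.
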